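(* Let $(M,d)$ be a pointed metric space. The space $\mathrm{Lip}_0(M)$ has the $w^*$-LD2P if and only if for every finite cyclically monotonic subset $A\subseteq\widetilde M$ and every $\gamma\in(0,1)$ there exist $u,v\in M$ with $u\ne v$ such that $A\cup\{(u,v)\}$ and $A\cup\{(v,u)\}$ are both $\gamma$-cyclically monotonic.
   Context: $M$ has base point $0$; $\mathrm{Lip}_0(M)$ is the real Banach space of Lipschitz $f\colon M\to\mathbb R$ with $f(0)=0$, normed by the best Lipschitz constant. It is the dual of the Lipschitz-free space $\mathcal F(M)$ (norm-closed span of the point evaluations $\delta_x$ in $\mathrm{Lip}_0(M)^*$). $\mathrm{Lip}_0(M)$ has the $w^*$-LD2P if every $w^*$-slice $\{f\in B_{\mathrm{Lip}_0(M)}: \mu(f)>1-\alpha\}$, with $\mu\in\mathcal F(M)$, $\|\mu\|=1$, $\alpha>0$, has diameter $2$. $\widetilde M=\{(x,y)\in M\times M:x\ne y\}$. For $\gamma\in(0,1]$, $A\subseteq\widetilde M$ is $\gamma$-cyclically monotonic if for every finite sequence $(x_1,y_1),\dots,(x_n,y_n)\in A$, with $y_{n+1}=y_1$, $\sum_{i=1}^n\min\{d(x_i,y_{i+1})-\gamma d(x_i,y_i),\,d(y_i,y_{i+1})\}\ge0$; $A$ is cyclically monotonic if for every such sequence $\sum_i d(x_i,y_{i+1})\ge\sum_i d(x_i,y_i)$. *)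

From HB Require Import structures.
From mathcomp Require Import all_boot all_order all_algebra.
From mathcomp Require Import boolp classical_sets cardinality reals.
Set Implicit Arguments. Unset Strict Implicit. Unset Printing Implicit Defensive.
Import Order.TTheory GRing.Theory Num.Theory.
Local Open Scope classical_set_scope.
Local Open Scope ring_scope.

Section Defs.
Variables (R : realType) (M : Type) (d : M -> M -> R) (z0 : M).

Definition is_metric : Prop :=
  [/\ forall x y, 0 <= d x y,
      forall x y, d x y = 0 <-> x = y,
      forall x y, d x y = d y x &
      forall x y z, d x z <= d x y + d y z].

Definition Lip0 (f : M -> R) : Prop :=
  f z0 = 0 /\ exists L : R, forall x y, `|f x - f y| <= L * d x y.

Definition lipnorm (f : M -> R) : R :=
  sup [set r : R | exists x y : M, x <> y /\ r = `|f x - f y| / d x y].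

Definition BLip0 : set (M -> R) := [set f | Lip0 f /\ lipnorm f <= 1].

(* functionals on Lip_0(M) are modelled as maps (M -> R) -> R; only their
   values on Lip_0(M) (indeed on its unit ball) matter. *)
Definition dualnorm (mu : (M -> R) -> R) : R := sup [set r : R | exists f, BLip0 f /\ r = `|mu f|].

(* finite linear combination  sum_i a_i delta_{x_i} *)
Definition molec (m : seq (R * M)) (f : M -> R) : R :=
  \sum_(p <- m) p.1 * f p.2.

(* mu belongs to F(M): the norm closure of span{delta_x} in Lip_0(M)^*,
   i.e. for each eps > 0 some m in span{delta_x} has ||mu - m|| <= eps *)
Definition in_FM (mu : (M -> R) -> R) : Prop :=
  forall eps : R, 0 < eps -> exists m : seq (R * M),
    forall f, BLip0 f -> `|mu f - molec m f| <= eps.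

Definition wslice (mu : (M -> R) -> R) (alpha : R) : set (M -> R) :=
  [set f | BLip0 f /\ mu f > 1 - alpha].

Definition diam_Lip (S : set (M -> R)) : R :=
  sup [set r : R | exists f g, S f /\ S g /\ r = lipnorm (f \- g)].

Definition wstar_LD2P : Prop :=
  forall (mu : (M -> R) -> R) (alpha : R),
    in_FM mu -> dualnorm mu = 1 -> 0 < alpha ->
    diam_Lip (wslice mu alpha) = 2.

(* pairs (x_1,y_1),...,(x_n,y_n) in A, cyclic index y_{n+1} = y_1 *)
Definition gamma_cyc_mono (gamma : R) (A : set (M * M)) : Prop :=
  forall (n : nat) (x y : nat -> M),
    (forall i, (i < n)%N -> A (x i, y i)) ->
    0 <= \sum_(i < n) Num.min (d (x i) (y ((i.+1) %% n)%N) - gamma * d (x i) (y i))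
                               (d (y i) (y ((i.+1) %% n)%N)).

Definition cyc_mono (A : set (M * M)) : Prop :=
  forall (n : nat) (x y : nat -> M),
    (forall i, (i < n)%N -> A (x i, y i)) ->
    \sum_(i < n) d (x i) (y i) <= \sum_(i < n) d (x i) (y ((i.+1) %% n)%N).

Definition Mtilde : set (M * M) := [set p | p.1 <> p.2].

End Defs.

(* A set B of pairs is gamma-cyclically monotone iff some 1-Lipschitz g satisfies
   g x - g y >= gamma d(x, y) on B: Rockafellar potentials on B, extended to M by
   McShane's formula, give g; the converse telescopes along the cycle.

   If Lip_0(M) has the w*-LD2P and A is finite and cyclically monotone, average the
   normalised molecules (delta_x - delta_y) / d(x, y) over A.  A potential for A shows
   this functional has norm 1, every f of a thin enough slice is gamma-norming on A, and
   two slice functions at distance > 1 + gamma yield a pair (u, v) that one of them norms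
   and the other norms reversed.

   Conversely, approximate mu by a molecule m and let fs maximise m on the unit ball
   (a compact problem on the finitely many support points).  The pairs on which fs is
   tight form a cyclically monotone set A.  A 1-Lipschitz g that is gamma-norming on A
   satisfies gamma m(fs) <= m(g), for otherwise a small step from fs away from g would
   beat fs.  So the functions given by the pairs (u, v) and (v, u) lie in the slice and
   are at distance at least 2 gamma. *)

From mathcomp Require Import all_boot all_order all_algebra.
From mathcomp Require Import boolp classical_sets cardinality reals.
From mathcomp Require Import topology normedtype matrix_normedtype derive.
From mathcomp Require Import ring lra.
Import Order.TTheory GRing.Theory Num.Theory numFieldNormedType.Exports.
Local Open Scope classical_set_scope.
Local Open Scope ring_scope.
Set Implicit Arguments. Unset Strict Implicit. Unset Printing Implicit Defensive.

Lemma sum_cyclic_telescope (R : numDomainType) n (h : nat -> R) :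
  \sum_(i < n) (h i - h (i.+1 %% n)%N) = 0.
Proof.
case: n => [|n]; first by rewrite big_ord0.
rewrite sumrB big_ord_recl [X in _ - X]big_ord_recr /= modnn addrC.
apply/eqP; rewrite subr_eq0; apply/eqP; congr (_ + _).
by apply: eq_bigr => i _; rewrite modn_small // ltnS.
Qed.

Section MolecAlgebra.
Variables (R : realType) (M : Type) (m : seq (R * M)).

Lemma molecN f : molec m (fun z => - f z) = - molec m f.
Proof. by rewrite /molec -sumrN; apply: eq_bigr => p _; rewrite mulrN. Qed.

Lemma molec_comb a b f g :
  molec m (fun z => a * f z + b * g z) = a * molec m f + b * molec m g.
Proof. by rewrite /molec !mulr_sumr -big_split; apply: eq_bigr => p _ /=; ring. Qed.

End MolecAlgebra.

Section CyclicPotential.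
Variables (R : realType) (I : Type) (S : set I) (c : I -> I -> R).
Hypothesis c_cycle : forall k (p : nat -> I), (forall l, (l < k)%N -> S (p l)) ->
  0 <= \sum_(l < k) c (p l) (p (l.+1 %% k)%N).

Fixpoint walk_cost (i0 i : I) (s : seq I) : R :=
  if s is j :: s' then c i j + walk_cost i0 j s' else c i i0.

Lemma walk_costE i0 i s : walk_cost i0 i s =
  \sum_(l < size s) c (nth i0 (i :: s) l) (nth i0 (i :: s) l.+1) + c (last i s) i0.
Proof.
elim: s i => [|j s IHs] i /=; first by rewrite big_ord0 add0r.
by rewrite big_ord_recl IHs addrA.
Qed.

Lemma walk_cost_cycle i0 s : walk_cost i0 i0 s =
  \sum_(l < (size s).+1) c (nth i0 (i0 :: s) l) (nth i0 (i0 :: s) (l.+1 %% (size s).+1)%N).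
Proof.
rewrite walk_costE big_ord_recr /= modnn -[last i0 s](nth_last i0 (i0 :: s)).
congr (_ + _); apply: eq_bigr => l _; rewrite modn_small // ltnS.
exact: ltn_ord.
Qed.

Lemma cyclic_potential : exists a : I -> R, forall i j, S i -> S j -> a i <= c i j + a j.
Proof.
have [[i0 Si0]|S0] := pselect (S !=set0); last first.
  by exists (fun=> 0) => i j Si; case: S0; exists i.
pose W := [set s : seq I | forall l, (l < size s)%N -> S (nth i0 s l)].
pose walks i := [set walk_cost i0 i s | s in W].
(* closing a walk from i with the edge i0 -> i gives a cycle *)
have walks_lbound i : S i -> has_lbound (walks i).
  move=> Si; exists (- c i0 i) => _ [s Ws <-]; rewrite lerNl -subr_ge0 opprK.
  rewrite -[_ + _]/(walk_cost i0 i0 (i :: s)) walk_cost_cycle.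
  by apply: c_cycle => -[|[|l]] //= /Ws.
exists (fun i => inf (walks i)) => i j Si Sj.
rewrite -lerBlDl; apply: lb_le_inf => [|_ [s Ws <-]].
  by exists (walk_cost i0 j [::]), [::].
rewrite lerBlDl; apply: (ge_inf (walks_lbound i Si)).
by exists (j :: s) => // -[|l] //= /Ws.
Qed.

End CyclicPotential.

Section Metric.
Variables (R : realType) (M : Type) (d : M -> M -> R).
Hypothesis hd : is_metric d.

Lemma metric_ge0 x y : 0 <= d x y. Proof. by case: hd. Qed.
Lemma metric_xx x : d x x = 0. Proof. by case: hd => _ /(_ x x) [_ ->]. Qed.
Lemma metricC x y : d x y = d y x. Proof. by case: hd. Qed.
Lemma metric_triangle x y z : d x z <= d x y + d y z. Proof. by case: hd. Qed.

Lemma metric_gt0 x y : x <> y -> 0 < d x y.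
Proof.
move=> xy; rewrite lt_def metric_ge0 andbT.
by case: hd => _ hd0 _ _; apply/eqP => /hd0.
Qed.

Definition lip1 (g : M -> R) := forall x y, g x - g y <= d x y.

Definition lip1_on (A : set M) (g : M -> R) :=
  forall x y, A x -> A y -> g x - g y <= d x y.

Definition norming (gamma : R) (g : M -> R) (B : set (M * M)) :=
  forall p, B p -> gamma * d p.1 p.2 <= g p.1 - g p.2.

Lemma norming_setU1 gamma g B p : norming gamma g B ->
  gamma * d p.1 p.2 <= g p.1 - g p.2 -> norming gamma g (B `|` [set p]).
Proof. by move=> gB gp q [/gB|->]. Qed.

Lemma lip1_normr g x y : lip1 g -> `|g x - g y| <= d x y.
Proof. by move=> g1; rewrite ler_norml g1 andbT lerNl opprB metricC g1. Qed.

Section McShane.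
Variables (I : Type) (B : set I) (pt : I -> M) (b : I -> R).
Hypothesis b_lip : forall i j, B i -> B j -> b i - b j <= d (pt i) (pt j).

Definition mcshane z := inf [set b i + d z (pt i) | i in B].

Lemma mcshane_le z i : B i -> mcshane z <= b i + d z (pt i).
Proof.
move=> Bi; apply: ge_inf; last by exists i.
exists (b i - d z (pt i)) => _ [j Bj <-].
have := b_lip Bi Bj; have := metric_triangle (pt i) z (pt j).
rewrite [d _ z]metricC; lra.
Qed.

Lemma mcshane_ge z r : B !=set0 -> (forall i, B i -> r <= b i + d z (pt i)) ->
  r <= mcshane z.
Proof.
move=> [i Bi] r_le; apply: lb_le_inf => [|_ [j Bj <-]]; last exact: r_le.
by exists (b i + d z (pt i)), i.
Qed.

Lemma mcshane_lip1 : lip1 mcshane.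
Proof.
move=> z w; have [B0|/set0P B0] := eqVneq B set0.
  by rewrite /mcshane B0 !image_set0 subrr metric_ge0.
rewrite lerBlDr -lerBlDl; apply: mcshane_ge => // i Bi.
have := mcshane_le z Bi; have := metric_triangle z w (pt i); lra.
Qed.

Lemma mcshane_eq i : B i -> mcshane (pt i) = b i.
Proof.
move=> Bi; apply/eqP; rewrite eq_le; apply/andP; split.
  by have := mcshane_le (pt i) Bi; rewrite metric_xx addr0.
apply: mcshane_ge => [|j Bj]; first by exists i.
by rewrite -lerBlDl; exact: b_lip.
Qed.

End McShane.

Lemma norming_of_potential gamma (B : set (M * M)) (a : M * M -> R) :
  (forall p q, B p -> B q -> a p <= d p.1 q.2 - gamma * d p.1 p.2 + a q) ->
  (forall p q, B p -> B q -> a p <= d p.2 q.2 + a q) ->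
  exists2 g, lip1 g & norming gamma g B.
Proof.
move=> a_norming a_lip.
have a_diff p q : B p -> B q -> a p - a q <= d p.2 q.2.
  by move=> Bp Bq; rewrite lerBlDr; exact: a_lip.
exists (mcshane B snd a); first exact: mcshane_lip1.
move=> p Bp; rewrite mcshane_eq // lerBrDr; apply: mcshane_ge => [|q Bq].
  by exists p.
by have := a_norming p q Bp Bq; lra.
Qed.

Lemma norming_gamma_cyc_mono gamma g B :
  lip1 g -> norming gamma g B -> gamma_cyc_mono d gamma B.
Proof.
move=> g1 gB n x y Bxy; rewrite -[leLHS](sum_cyclic_telescope n (g \o y)).
apply: ler_sum => i _; rewrite le_min g1 andbT /=.
have := gB _ (Bxy i (ltn_ord i)); have := g1 (x i) (y (i.+1 %% n)%N); rewrite /=; lra.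
Qed.

Lemma gamma_cyc_monoP gamma B :
  gamma_cyc_mono d gamma B <-> exists2 g, lip1 g & norming gamma g B.
Proof.
split=> [Bcm|[g g1 gB]]; last exact: norming_gamma_cyc_mono gB.
pose c (p q : M * M) := Num.min (d p.1 q.2 - gamma * d p.1 p.2) (d p.2 q.2).
have [|a ha] := @cyclic_potential R _ B c.
  move=> k p Bp; apply: (Bcm k (fst \o p) (snd \o p)) => l /Bp.
  by rewrite /= -surjective_pairing.
apply: (@norming_of_potential _ _ a) => p q Bp Bq; apply: le_trans (ha p q Bp Bq) _.
  by rewrite lerD2r ge_min lexx.
by rewrite lerD2r ge_min lexx orbT.
Qed.

Lemma cyc_monoP A : cyc_mono d A <-> exists2 g, lip1 g & norming 1 g A.
Proof.
split=> [Acm|[g g1 gA] n x y Axy].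
  pose c (p q : M * M) := d p.1 q.2 - d p.1 p.2.
  have [|a ha] := @cyclic_potential R _ A c.
    move=> k p Ap; rewrite sumrB subr_ge0.
    apply: (Acm k (fst \o p) (snd \o p)) => l /Ap.
    by rewrite /= -surjective_pairing.
  apply: (@norming_of_potential _ _ a) => p q Ap Aq; apply: le_trans (ha p q Ap Aq) _.
    by rewrite mul1r.
  by rewrite lerD2r lerBlDr addrC metric_triangle.
rewrite -subr_ge0 -sumrB -[leLHS](sum_cyclic_telescope n (g \o y)).
apply: ler_sum => i _; have := gA _ (Axy i (ltn_ord i)).
have := g1 (x i) (y (i.+1 %% n)%N); rewrite /= mul1r; lra.
Qed.

Lemma gamma_cyc_mono_set1 gamma u v : gamma <= 1 -> gamma_cyc_mono d gamma [set (u, v)].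
Proof.
move=> gamma1; apply/gamma_cyc_monoP; exists (fun z => d z v) => [z w|_ ->] /=.
  by have := metric_triangle z w v; lra.
by rewrite metric_xx subr0 ler_piMl ?metric_ge0.
Qed.

End Metric.

Section LipschitzBall.
Variables (R : realType) (M : Type) (d : M -> M -> R) (z0 : M).
Hypothesis hd : is_metric d.

Lemma lipnorm_ge (f : M -> R) x y :
  (exists L, forall x y, `|f x - f y| <= L * d x y) -> x <> y ->
  `|f x - f y| / d x y <= lipnorm d f.
Proof.
move=> [L hL] xy; apply: sup_upper_bound; last by exists x, y.
split; first by exists (`|f x - f y| / d x y), x, y.
by exists L => _ [a [b [ab ->]]]; rewrite ler_pdivrMr ?(metric_gt0 hd).
Qed.

Lemma lipnorm_le (f : M -> R) C : 0 <= C ->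
  (forall x y, `|f x - f y| <= C * d x y) -> lipnorm d f <= C.
Proof.
move=> C0 hC; rewrite /lipnorm; set E := [set r | _].
have [->|/set0P E0] := eqVneq E set0; first by rewrite sup0.
by apply: ge_sup => // _ [x [y [xy ->]]]; rewrite ler_pdivrMr ?(metric_gt0 hd).
Qed.

Lemma BLip0P f : BLip0 d z0 f <-> f z0 = 0 /\ lip1 d f.
Proof.
split=> [[[f0 fL] f1]|[f0 f1]].
  split=> // x y; have [->|xy] := pselect (x = y).
    by rewrite subrr (metric_ge0 hd).
  have := le_trans (lipnorm_ge fL xy) f1.
  by rewrite ler_pdivrMr ?(metric_gt0 hd) // mul1r; exact: le_trans (ler_norm _).
have f1' x y : `|f x - f y| <= 1 * d x y by rewrite mul1r (lip1_normr hd).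
by split; [split=> //; exists 1 | exact: lipnorm_le].
Qed.

Lemma BLip0_lip1 f : BLip0 d z0 f -> lip1 d f.
Proof. by case/BLip0P. Qed.

Lemma BLip0N f : BLip0 d z0 f -> BLip0 d z0 (fun z => - f z).
Proof.
case/BLip0P => f0 f1; apply/BLip0P; split=> [|x y]; first by rewrite f0 oppr0.
by have := f1 y x; rewrite (metricC hd); lra.
Qed.

Lemma BLip0_shift g : lip1 d g -> BLip0 d z0 (fun z => g z - g z0).
Proof.
by move=> g1; apply/BLip0P; split=> [|x y]; rewrite ?subrr // opprB addrA subrK g1.
Qed.

Lemma BLip0B_lip f g x y : BLip0 d z0 f -> BLip0 d z0 g ->
  `|(f \- g) x - (f \- g) y| <= 2 * d x y.
Proof.
move=> /BLip0_lip1/(lip1_normr hd) f1 /BLip0_lip1/(lip1_normr hd) g1 /=.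
have -> : f x - g x - (f y - g y) = (f x - f y) - (g x - g y) by ring.
have := ler_normB (f x - f y) (g x - g y); have := f1 x y; have := g1 x y; lra.
Qed.

Lemma dualnorm_eq1 (mu : (M -> R) -> R) :
  (forall f, BLip0 d z0 f -> `|mu f| <= 1) -> (exists2 f, BLip0 d z0 f & mu f = 1) ->
  dualnorm d z0 mu = 1.
Proof.
move=> mu_le [f Bf muf]; apply/eqP; rewrite eq_le; apply/andP; split.
  by apply: ge_sup => [|_ [g [Bg ->]]]; [exists `|mu f|, f | exact: mu_le].
apply: sup_upper_bound; last by exists f; rewrite muf normr1.
by split; [exists `|mu f|, f | exists 1 => _ [g [Bg ->]]; exact: mu_le].
Qed.

Lemma dualnorm1_adherent (mu : (M -> R) -> R) eps : dualnorm d z0 mu = 1 -> 0 < eps ->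
  exists2 f, BLip0 d z0 f & 1 - eps < `|mu f|.
Proof.
rewrite /dualnorm; set E := [set r | _] => E1 eps0.
have hE : has_sup E.
  by apply: contrapT => /sup_out; rewrite E1 => /eqP; rewrite oner_eq0.
by have [_ [f [Bf ->]]] := sup_adherent eps0 hE; rewrite E1; exists f.
Qed.

Lemma diam_Lip_eq2 (S : set (M -> R)) : S `<=` BLip0 d z0 ->
  (forall beta, 0 < beta -> exists f g, [/\ S f, S g & 2 - beta <= lipnorm d (f \- g)]) ->
  diam_Lip d S = 2.
Proof.
move=> SB near2; rewrite /diam_Lip; set E := [set r | _].
have E_le2 r : E r -> r <= 2.
  move=> [f [g [Sf [Sg ->]]]]; apply: lipnorm_le => // x y.
  exact: BLip0B_lip (SB _ Sf) (SB _ Sg).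
have [f [g [Sf Sg _]]] := near2 1 ltr01.
have E0 : E !=set0 by exists (lipnorm d (f \- g)), f, g.
apply/eqP; rewrite eq_le ge_sup //=; apply/ler_addgt0Pr => beta beta0.
have [f' [g' [Sf' Sg' fg']]] := near2 beta beta0.
have hE : has_sup E by split=> //; exists 2.
rewrite -lerBlDr; apply: le_trans fg' _; apply: (sup_upper_bound hE).
by exists f', g'.
Qed.

Lemma diam_Lip2_witness (S : set (M -> R)) gamma : S `<=` BLip0 d z0 ->
  diam_Lip d S = 2 -> 0 <= gamma < 1 ->
  exists f h u v, [/\ S f, S h, u <> v & (1 + gamma) * d u v < (f u - f v) - (h u - h v)].
Proof.
rewrite /diam_Lip; set E := [set r | _] => SB E2 /andP[gamma0 gamma1].
have hE : has_sup E.
  by apply: contrapT => /sup_out; rewrite E2 => /eqP; rewrite pnatr_eq0.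
have gap : 0 < 1 - gamma by rewrite subr_gt0.
have [_ [f [h [Sf [Sh ->]]]]] := sup_adherent gap hE.
rewrite E2 => fh; apply: contrapT => no_pair.
suff: lipnorm d (f \- h) <= 1 + gamma by lra.
apply: lipnorm_le => [|x y /=]; first lra.
have [<-|xy] := pselect (x = y).
  by rewrite subrr normr0 mulr_ge0 ?(metric_ge0 hd) //; lra.
rewrite leNgt ltr_normr; apply/negP => /orP[] lt.
  by apply: no_pair; exists f, h, x, y; split=> //; lra.
by apply: no_pair; exists h, f, x, y; split=> //; lra.
Qed.

Lemma diam2_norming_extension (S : set (M -> R)) gamma A : S `<=` BLip0 d z0 ->
  diam_Lip d S = 2 -> 0 <= gamma < 1 -> (forall f, S f -> norming d gamma f A) ->
  exists u v, [/\ u <> v, gamma_cyc_mono d gamma (A `|` [set (u, v)])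
                        & gamma_cyc_mono d gamma (A `|` [set (v, u)])].
Proof.
move=> SB S2 gamma01 S_norming.
have [f [h [u [v [Sf Sh uv fh]]]]] := diam_Lip2_witness SB S2 gamma01.
have f_lip := BLip0_lip1 (SB _ Sf); have h_lip := BLip0_lip1 (SB _ Sh).
have := lip1_normr hd u v f_lip; have := lip1_normr hd v u h_lip.
rewrite (metricC hd v) => h_uv f_uv.
exists u, v; split=> //; apply/(gamma_cyc_monoP hd).
  exists f; [exact: f_lip | apply: norming_setU1 (S_norming _ Sf) _].
  by rewrite /=; have := ler_norm (h v - h u); lra.
exists h; [exact: h_lip | apply: norming_setU1 (S_norming _ Sh) _].
by rewrite /= (metricC hd); have := ler_norm (f u - f v); lra.
Qed.

Lemma lipnormB_ge_pair f g u v gamma : BLip0 d z0 f -> BLip0 d z0 g -> u <> v ->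
  gamma * d u v <= f u - f v -> gamma * d v u <= g v - g u ->
  2 * gamma <= lipnorm d (f \- g).
Proof.
move=> Bf Bg uv f_uv g_vu.
have fg_lip : exists L, forall x y, `|(f \- g) x - (f \- g) y| <= L * d x y.
  by exists 2 => x y; exact: BLip0B_lip.
apply: le_trans (lipnorm_ge fg_lip uv); rewrite ler_pdivlMr ?(metric_gt0 hd) //=.
rewrite (metricC hd v) in g_vu; have := ler_norm (f u - g u - (f v - g v)); nra.
Qed.

Lemma molec_max_ge (mu : (M -> R) -> R) m fs eps : dualnorm d z0 mu = 1 -> 0 < eps ->
  (forall f, BLip0 d z0 f -> `|mu f - molec m f| <= eps) ->
  (forall h, BLip0 d z0 h -> molec m h <= molec m fs) -> 1 - 2 * eps <= molec m fs.
Proof.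
move=> mu_norm eps_gt0 m_approx fs_max.
have [f Bf f_large] := dualnorm1_adherent mu_norm eps_gt0.
have : 1 - 2 * eps < `|molec m f|.
  by have := m_approx f Bf; have := lerB_dist (mu f) (molec m f); lra.
rewrite ltr_normr => /orP[] m_large; apply/ltW/(lt_le_trans m_large); first exact: fs_max.
by rewrite -molecN; exact/fs_max/BLip0N.
Qed.

End LipschitzBall.

Lemma lip_polytope_compact (R : realType) k (D : 'I_k -> 'I_k -> R) (i0 : 'I_k) :
  compact [set v : 'rV[R]_k | v ord0 i0 = 0 /\ forall i j, v ord0 i - v ord0 j <= D i j].
Proof.
set K := [set v | _].
have coordB_cont i j : continuous (fun v : 'rV[R]_k => v ord0 i - v ord0 j).
  by move=> v; apply: continuousB; exact: coord_continuous.
have K_closed : closed K.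
  have -> : K = (fun v : 'rV[R]_k => v ord0 i0) @^-1` [set 0] `&`
      \bigcap_(ij in [set: 'I_k * 'I_k])
        (fun v : 'rV[R]_k => v ord0 ij.1 - v ord0 ij.2) @^-1` [set r | r <= D ij.1 ij.2].
    apply/seteqP; split=> v /= [v0 vD]; split=> //.
      by move=> [i j] _; exact: vD.
    by move=> i j; exact: (vD (i, j)).
  apply: closedI.
    apply: (@preimage_closed _ _ (fun v : 'rV[R]_k => v ord0 i0)); last exact: closed_eq.
    by move=> v _; exact: coord_continuous.
  apply: closed_bigI => -[i j] _.
  apply: (@preimage_closed _ _ (fun v : 'rV[R]_k => v ord0 i - v ord0 j)); last exact: closed_le.
  by move=> v _; exact: coordB_cont.
have box_compact := rV_compact (fun i => @segment_compact R (- D i0 i) (D i i0)).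
apply: (subclosed_compact K_closed box_compact) => v [v0 vD] i /=.
by rewrite in_itv /=; have := vD i i0; have := vD i0 i; rewrite v0 => ? ?; apply/andP; split; lra.
Qed.

Section MolecMax.
Variables (R : realType) (M : Type) (d : M -> M -> R) (z0 : M).
Hypothesis hd : is_metric d.
Variable m : seq (R * M).

Definition molec_pt (i : 'I_(size m).+1) : M := nth z0 (z0 :: map snd m) i.

Definition molec_row (v : 'rV[R]_(size m).+1) : R :=
  \sum_(j < size m) (nth (0, z0) m j).1 * v ord0 (lift ord0 j).

Lemma molec_rowE h : molec m h = molec_row (\row_i h (molec_pt i)).
Proof.
rewrite /molec (big_nth (0, z0)) big_mkord; apply: eq_bigr => j _.
by rewrite mxE /molec_pt lift0 /= (nth_map (0, z0)).
Qed.

Lemma molec_row_continuous : continuous molec_row.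
Proof.
apply: continuous_big => [|j _ v]; first exact: add_continuous.
by apply: continuousM; [exact: cst_continuous | exact: coord_continuous].
Qed.

Lemma molec_max_exists : exists2 fs, BLip0 d z0 fs &
  forall h, h z0 = 0 -> lip1_on d (range molec_pt) h -> molec m h <= molec m fs.
Proof.
set K := [set v : 'rV[R]_(size m).+1 | v ord0 ord0 = 0 /\
  forall i j, v ord0 i - v ord0 j <= d (molec_pt i) (molec_pt j)].
have K0 : K !=set0 by exists 0; split=> [|i j]; rewrite !mxE ?subrr ?(metric_ge0 hd).
have K_compact : compact K by exact: lip_polytope_compact.
have [v /set_mem[v0 v_lip] v_max] := compact_EVT_max K0 K_compact
  (continuous_subspaceT molec_row_continuous).
pose fs := mcshane d setT molec_pt (fun i => v ord0 i).
have fs_lip i j : setT i -> setT j -> v ord0 i - v ord0 j <= d (molec_pt i) (molec_pt j).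
  by move=> _ _; exact: v_lip.
have fsE : \row_i fs (molec_pt i) = v.
  by apply/rowP => i; rewrite mxE /fs (mcshane_eq hd fs_lip) // [ord0]ord1.
exists fs.
  apply/(BLip0P _ hd); split; last exact: mcshane_lip1.
  by rewrite -[z0]/(molec_pt ord0) /fs (mcshane_eq hd fs_lip).
move=> h h0 h_lip; rewrite !molec_rowE fsE; apply/v_max/mem_set; split.
  by rewrite mxE.
by move=> i j; rewrite !mxE; apply: h_lip; [exists i | exists j].
Qed.

End MolecMax.

Arguments molec_pt {R M} z0 m.

Section Perturbation.
Variables (R : realType) (M : Type) (d : M -> M -> R) (z0 : M).
Hypothesis hd : is_metric d.

Definition tight_pairs (A : set M) (f : M -> R) : set (M * M) :=
  [set p | [/\ A p.1, A p.2, p.1 <> p.2 & f p.1 - f p.2 = d p.1 p.2]].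

Lemma tight_pairs_finite A f : finite_set A -> finite_set (tight_pairs A f).
Proof.
move=> A_fin; apply: (@sub_finite_set _ _ (A `*` A)); last exact: finite_setX.
by move=> p [].
Qed.

Lemma tight_pairs_Mtilde A f : tight_pairs A f `<=` @Mtilde M.
Proof. by move=> p []. Qed.

Lemma tight_pairs_cyc_mono A f : lip1 d f -> cyc_mono d (tight_pairs A f).
Proof. by move=> f_lip; apply/(cyc_monoP hd); exists f => // p [_ _ _ ->]; rewrite mul1r. Qed.

Lemma finite_step_exists (I : finType) (a b : I -> R) : (forall i, 0 <= a i) ->
  exists2 t, 0 < t & forall i, 0 < b i -> t * a i <= b i.
Proof.
move=> a_ge0; exists (\big[Num.min/1]_(i | 0 < b i) (b i / (a i + 1))).
  by apply: lt_bigmin => // i b_gt0; rewrite divr_gt0 // ltr_pwDr.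
move=> i b_gt0; have a1_gt0 : 0 < a i + 1 by rewrite ltr_pwDr.
have t_le := @bigmin_le_cond _ _ _ 1 i (fun i => 0 < b i) (fun i => b i / (a i + 1)) b_gt0.
apply: le_trans (ler_wpM2r (a_ge0 i) t_le) _.
by rewrite mulrAC ler_pdivrMr // ler_pM2l // lerDl.
Qed.

Variables (I : finType) (pt : I -> M) (m : seq (R * M)) (fs : M -> R).
Hypotheses (fs0 : fs z0 = 0) (fs_lip : lip1_on d (range pt) fs).
Hypothesis fs_max : forall h, h z0 = 0 -> lip1_on d (range pt) h -> molec m h <= molec m fs.

Lemma perturb_step_le gamma g t i j : 0 < gamma < 1 -> lip1 d g ->
  norming d gamma g (tight_pairs (range pt) fs) -> 0 < t ->
  (0 < d (pt i) (pt j) - (fs (pt i) - fs (pt j)) ->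
    t * (fs (pt i) - fs (pt j) + d (pt i) (pt j)) <= d (pt i) (pt j) - (fs (pt i) - fs (pt j))) ->
  (1 + t) * (fs (pt i) - fs (pt j)) - t * (g (pt i) - g (pt j)) <=
    (1 + t * (1 - gamma)) * d (pt i) (pt j).
Proof.
move=> /andP[gamma0 gamma1] g_lip g_norming t_gt0 t_step.
have pt_range k : range pt (pt k) by exists k.
have fs_lipD : fs (pt i) - fs (pt j) <= d (pt i) (pt j) by exact: fs_lip.
have g_lipD : - (g (pt i) - g (pt j)) <= d (pt i) (pt j).
  by rewrite opprB (metricC hd) g_lip.
have tD_ge0 : 0 <= t * (1 - gamma) * d (pt i) (pt j).
  by rewrite !mulr_ge0 ?(metric_ge0 hd) // ?subr_ge0 ltW.
have [slack_gt0|] := ltP 0 (d (pt i) (pt j) - (fs (pt i) - fs (pt j))).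
  have := t_step slack_gt0.
  have : - t * (g (pt i) - g (pt j)) <= t * d (pt i) (pt j).
    by rewrite mulNr -mulrN ler_wpM2l // ltW.
  nra.
rewrite subr_le0 => tight.
have {}tight : fs (pt i) - fs (pt j) = d (pt i) (pt j).
  by apply/eqP; rewrite eq_le fs_lipD.
have [eq_ij|neq_ij] := pselect (pt i = pt j).
  by rewrite eq_ij !subrr (metric_xx hd) !mulr0 subrr.
have := g_norming (pt i, pt j) (And4 (pt_range i) (pt_range j) neq_ij tight) => /= g_ge.
have : t * (gamma * d (pt i) (pt j)) <= t * (g (pt i) - g (pt j)).
  by rewrite ler_wpM2l // ltW.
rewrite tight; nra.
Qed.

Lemma molec_max_perturb gamma g : 0 < gamma < 1 -> lip1 d g -> g z0 = 0 ->
  norming d gamma g (tight_pairs (range pt) fs) -> gamma * molec m fs <= molec m g.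
Proof.
move=> gamma01 g_lip g0 g_norming; have /andP[gamma0 gamma1] := gamma01.
have slope_ge0 (ij : I * I) : 0 <= fs (pt ij.1) - fs (pt ij.2) + d (pt ij.1) (pt ij.2).
  have fs_lipD : fs (pt ij.2) - fs (pt ij.1) <= d (pt ij.2) (pt ij.1) by exact: fs_lip.
  by rewrite (metricC hd) in fs_lipD; lra.
(* a step t small enough to keep every non-tight constraint on the support *)
have [t t_gt0 t_step] := finite_step_exists
  (fun ij => d (pt ij.1) (pt ij.2) - (fs (pt ij.1) - fs (pt ij.2))) slope_ge0.
pose lam := 1 + t * (1 - gamma).
have lam_gt0 : 0 < lam.
  have : 0 < t * (1 - gamma) by rewrite mulr_gt0 // subr_gt0.
  rewrite /lam; lra.
pose psi z := (1 + t) / lam * fs z + (- t / lam) * g z.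
have psi0 : psi z0 = 0 by rewrite /psi fs0 g0 !mulr0 addr0.
have psi_lip : lip1_on d (range pt) psi.
  move=> _ _ [i _ <-] [j _ <-].
  have -> : psi (pt i) - psi (pt j) =
      ((1 + t) * (fs (pt i) - fs (pt j)) - t * (g (pt i) - g (pt j))) / lam.
    by rewrite /psi; field; rewrite gt_eqF.
  rewrite ler_pdivrMr // [X in _ <= X]mulrC.
  exact: (perturb_step_le gamma01 g_lip g_norming t_gt0 (t_step (i, j))).
have := fs_max psi0 psi_lip; rewrite molec_comb.
set N := molec m fs; set G := molec m g => psi_le.
have : (1 + t) * N - t * G <= lam * N.
  have -> : (1 + t) * N - t * G = lam * ((1 + t) / lam * N + (- t / lam) * G).
    by field; rewrite gt_eqF.
  by rewrite ler_pM2l.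
rewrite /lam => comb_le; have : 0 <= t * (G - gamma * N) by nra.
by rewrite pmulr_rge0 // subr_ge0.
Qed.

Lemma molec_max_extend gamma p : 0 < gamma < 1 ->
  gamma_cyc_mono d gamma (tight_pairs (range pt) fs `|` [set p]) ->
  exists2 g, BLip0 d z0 g /\ gamma * molec m fs <= molec m g &
    gamma * d p.1 p.2 <= g p.1 - g p.2.
Proof.
move=> gamma01 /(gamma_cyc_monoP hd)[g g_lip g_norming].
have g_shift_norming q : (tight_pairs (range pt) fs `|` [set p]) q ->
    gamma * d q.1 q.2 <= (g q.1 - g z0) - (g q.2 - g z0).
  by move=> /g_norming; rewrite opprB addrA subrK.
exists (fun z => g z - g z0); last by apply: g_shift_norming; right.
split; first exact: BLip0_shift.
apply: molec_max_perturb => //.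
- by move=> z w; rewrite opprB addrA subrK g_lip.
- by rewrite subrr.
- by move=> q Aq; apply: g_shift_norming; left.
Qed.

End Perturbation.

Section PairsMolecule.
Variables (R : realType) (M : Type) (d : M -> M -> R) (z0 : M).
Hypothesis hd : is_metric d.
Variables (n : nat) (x y : nat -> M).
Hypothesis xy_neq : forall k, (k < n)%N -> x k <> y k.

Definition slope (f : M -> R) k := (f (x k) - f (y k)) / d (x k) (y k).

(* The average over k < n of (delta_(x k) - delta_(y k)) / d (x k) (y k). *)
Definition pairs_molec : seq (R * M) :=
  [seq ((n%:R * d (x k) (y k))^-1, x k) | k <- iota 0 n] ++
  [seq (- (n%:R * d (x k) (y k))^-1, y k) | k <- iota 0 n].

Lemma pairs_molecE f : molec pairs_molec f = n%:R^-1 * \sum_(k < n) slope f k.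
Proof.
rewrite /molec /pairs_molec (_ : iota 0 n = index_iota 0 n); last first.
  by rewrite /index_iota subn0.
rewrite big_cat /= !big_map -big_split big_mkord mulr_sumr; apply: eq_bigr => k _ /=.
by rewrite /slope invfM; ring.
Qed.

Lemma slope_le1 f k : (k < n)%N -> BLip0 d z0 f -> slope f k <= 1.
Proof.
move=> kn /(BLip0P _ hd)[_ f_lip].
by rewrite ler_pdivrMr ?mul1r ?f_lip //; exact/(metric_gt0 hd)/xy_neq.
Qed.

Lemma pairs_molec_le1 f : BLip0 d z0 f -> molec pairs_molec f <= 1.
Proof.
move=> Bf; rewrite pairs_molecE; have [->|n_gt0] := posnP n; first by rewrite invr0 mul0r.
rewrite ler_pdivrMl ?ltr0n // mulr1.
have -> : n%:R = \sum_(k < n) (1 : R) by rewrite sumr_const card_ord.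
by apply: ler_sum => k _; exact: slope_le1.
Qed.

Lemma pairs_molec_norm_le1 f : BLip0 d z0 f -> `|molec pairs_molec f| <= 1.
Proof.
move=> Bf; rewrite ler_norml pairs_molec_le1 // andbT lerNl -molecN.
exact/pairs_molec_le1/(BLip0N hd).
Qed.

Lemma pairs_molec_eq1 f : (0 < n)%N ->
  (forall k, (k < n)%N -> f (x k) - f (y k) = d (x k) (y k)) -> molec pairs_molec f = 1.
Proof.
move=> n_gt0 f_tight; rewrite pairs_molecE (eq_bigr (fun=> 1)) => [|k _].
  by rewrite sumr_const card_ord mulVf // pnatr_eq0 -lt0n.
by rewrite /slope f_tight // divff // gt_eqF // (metric_gt0 hd) //; exact: xy_neq.
Qed.

Lemma pairs_molec_slice gamma f : BLip0 d z0 f ->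
  1 - (1 - gamma) / n%:R < molec pairs_molec f ->
  forall k, (k < n)%N -> gamma * d (x k) (y k) <= f (x k) - f (y k).
Proof.
move=> Bf f_slice k kn; have n_gt0 : 0 < n%:R :> R by rewrite ltr0n (leq_ltn_trans _ kn).
have gap_k : 1 - slope f k <= \sum_(j < n) (1 - slope f j).
  rewrite (bigD1 (Ordinal kn)) //= lerDl; apply: sumr_ge0 => j _.
  by rewrite subr_ge0 slope_le1.
have gap_sum : \sum_(j < n) (1 - slope f j) = n%:R * (1 - molec pairs_molec f).
  by rewrite sumrB sumr_const card_ord pairs_molecE mulrBr mulr1 mulrA mulfV ?gt_eqF ?mul1r.
have gap_n : (1 - gamma) / n%:R * n%:R = 1 - gamma by rewrite divfK ?gt_eqF.
rewrite -ler_pdivlMr -?/(slope f k); first nra.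
exact/(metric_gt0 hd)/xy_neq.
Qed.

End PairsMolecule.

Lemma finite_set_enum (T : Type) (t0 : T) (A : set T) : finite_set A ->
  exists n (e : nat -> T), (forall k, (k < n)%N -> A (e k)) /\
    (forall p, A p -> exists2 k, (k < n)%N & e k = p).
Proof.
move=> /(@finite_seqP {classic T}) [s ->].
exists (size s), (nth t0 s); split=> [k ks|p ps]; first exact: mem_nth.
by exists (@index {classic T} p s); [rewrite index_mem | exact: (@nth_index {classic T})].
Qed.

Definition pair_extension_property (R : realType) (M : Type) (d : M -> M -> R) :=
  forall (A : set (M * M)) (gamma : R),
     finite_set A -> A `<=` @Mtilde M -> cyc_mono d A ->
     0 < gamma < 1 ->
     exists u v : M, u <> v /\
       gamma_cyc_mono d gamma (A `|` [set (u, v)]) /\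
       gamma_cyc_mono d gamma (A `|` [set (v, u)]).

Section Equivalence.
Variables (R : realType) (M : Type) (d : M -> M -> R) (z0 : M).
Hypothesis hd : is_metric d.

Lemma wstar_LD2P_extension : (exists a b : M, a <> b) ->
  wstar_LD2P d z0 -> pair_extension_property d.
Proof.
move=> [a [b ab]] LD A gamma A_fin A_tilde A_cm /andP[gamma0 gamma1].
have [n [e [eA Ae]]] := finite_set_enum (z0, z0) A_fin.
have [n0|n_gt0] := posnP n.
  have -> : A = set0 by apply/seteqP; split=> // p /Ae[k]; rewrite n0.
  by exists a, b; rewrite !set0U; split=> //; split; apply: gamma_cyc_mono_set1 (ltW _).
pose x k := (e k).1; pose y k := (e k).2.
have xy_neq k : (k < n)%N -> x k <> y k by move=> /eA/A_tilde.
pose mu := molec (pairs_molec d n x y).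
have mu_norm : dualnorm d z0 mu = 1.
  apply: dualnorm_eq1 => [f|]; first exact: pairs_molec_norm_le1.
  have [g g_lip g_tight] := (cyc_monoP hd A).1 A_cm.
  exists (fun z => g z - g z0); first exact: BLip0_shift.
  apply: pairs_molec_eq1 => // k kn; rewrite opprB addrA subrK.
  apply/eqP; rewrite eq_le g_lip -[X in X <= _]mul1r.
  exact: g_tight _ (eA k kn).
have mu_FM : in_FM d z0 mu.
  by move=> eps eps_gt0; exists (pairs_molec d n x y) => f _; rewrite subrr normr0 ltW.
have alpha_gt0 : 0 < (1 - gamma) / n%:R by rewrite divr_gt0 ?subr_gt0 ?ltr0n.
pose S := wslice d z0 mu ((1 - gamma) / n%:R).
have S_ball : S `<=` BLip0 d z0 by move=> f [].
have S_norming f : S f -> norming d gamma f A.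
  by move=> [Bf f_slice] _ /Ae[k kn <-]; exact: (pairs_molec_slice hd xy_neq Bf f_slice kn).
have gamma01 : 0 <= gamma < 1 by rewrite ltW.
have [u [v [uv cm_uv cm_vu]]] :=
  diam2_norming_extension hd S_ball (LD _ _ mu_FM mu_norm alpha_gt0) gamma01 S_norming.
by exists u, v.
Qed.

Lemma extension_wstar_LD2P : pair_extension_property d -> wstar_LD2P d z0.
Proof.
move=> ext mu alpha mu_FM mu_norm alpha_gt0.
apply: (diam_Lip_eq2 (z0 := z0) hd); first by move=> f [].
move=> beta beta_gt0.
(* with gamma = 1 - eta: gamma (1 - 2 eps) - eps > 1 - alpha and 2 gamma >= 2 - beta *)
pose eps := Num.min alpha 1 / 4.
have eps_gt0 : 0 < eps by rewrite divr_gt0 // lt_min alpha_gt0 ltr01.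
have eps_alpha : 4 * eps <= alpha by rewrite mulrC divfK ?pnatr_eq0 // ge_min lexx.
have eps_le : eps <= 1 / 4 by rewrite ler_pM2r ?invr_gt0 ?ltr0n // ge_min lexx orbT.
pose eta := Num.min (beta / 2) (eps / 2).
have eta_gt0 : 0 < eta by rewrite lt_min; apply/andP; split; exact: divr_gt0.
have [eta_beta eta_eps] : eta <= beta / 2 /\ eta <= eps / 2.
  by rewrite !ge_min !lexx ?orbT.
have gamma01 : 0 < 1 - eta < 1 by apply/andP; split; lra.
have [m m_approx] := mu_FM eps eps_gt0.
have [fs Bfs fs_max] := molec_max_exists z0 hd m.
have [fs0 fs_lip] := (BLip0P _ hd fs).1 Bfs.
have m_fs : 1 - 2 * eps <= molec m fs.
  apply: (molec_max_ge hd mu_norm eps_gt0 m_approx) => h /(BLip0P _ hd)[h0 h_lip].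
  by apply: fs_max => // z w _ _; exact: h_lip.
pose S := range (molec_pt z0 m).
have S_fin : finite_set S by exact/finite_image/finite_finset.
have [u [v [uv [cm_uv cm_vu]]]] := ext (tight_pairs d S fs) (1 - eta)
  (tight_pairs_finite d fs S_fin) (@tight_pairs_Mtilde _ _ d S fs)
  (tight_pairs_cyc_mono hd fs_lip) gamma01.
have slice_of_cm p : gamma_cyc_mono d (1 - eta) (tight_pairs d S fs `|` [set p]) ->
    exists2 g, wslice d z0 mu alpha g & (1 - eta) * d p.1 p.2 <= g p.1 - g p.2.
  move=> /(molec_max_extend hd fs0 (fun z w _ _ => fs_lip z w) fs_max gamma01).
  move=> [g [Bg g_large] g_p]; exists g => //; split=> //.
  have := m_approx g Bg; rewrite ler_norml => /andP[g_approx _].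
  have : (1 - eta) * (1 - 2 * eps) <= (1 - eta) * molec m fs.
    by rewrite ler_wpM2l // subr_ge0; lra.
  have : 0 <= eta * eps by rewrite mulr_ge0 // ltW.
  lra.
have [g [Bg g_slice] g_uv] := slice_of_cm (u, v) cm_uv.
have [h [Bh h_slice] h_vu] := slice_of_cm (v, u) cm_vu.
exists g, h; split=> //.
by apply: le_trans (lipnormB_ge_pair hd Bg Bh uv g_uv h_vu); lra.
Qed.

End Equivalence.

Theorem proposition4p3 (R : realType) (M : Type) (d : M -> M -> R) (z0 : M)
  (hd : is_metric d) (hM : exists a b : M, a <> b) :
  wstar_LD2P d z0 <->
  (forall (A : set (M * M)) (gamma : R),
     finite_set A -> A `<=` @Mtilde M -> cyc_mono d A ->
     0 < gamma < 1 ->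
     exists u v : M, u <> v /\
       gamma_cyc_mono d gamma (A `|` [set (u, v)]) /\
       gamma_cyc_mono d gamma (A `|` [set (v, u)])).
Proof.
split; [exact: wstar_LD2P_extension | exact: extension_wstar_LD2P].
Qed.
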